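(* Assume (H$_G$). Let $\alpha\in U$ and $\xi>0$, and set $\gamma=\alpha^{\nu-1}/\xi$. For each integer $d\ge\nu-1$ define the partial sum $$\mathcal G^{(d)}:=\alpha\sum_{j=0}^{\lfloor\frac{d-\nu+1}{2\nu}\rfloor}\ \sum_{i=\nu-1}^{d-2j\nu}\frac{a_{i,j,\nu}(\gamma)}{n^{2j+i/\nu}}.$$ Then for every $d\ge\nu-1$ there is a constant $K_{3,d}(\alpha,\gamma)$ such that, for all sufficiently large $n$, $$\Big|x_{n,\frac n\alpha,\frac{n^{\nu-1}}{\xi}}-\mathcal G^{(d)}\Big|<\frac{K_{3,d}(\alpha,\gamma)}{n^{(d+1)/\nu}}.$$
   Context: Fix an integer $\nu\ge2$. For $N,r>0$ let $w_{N,r}(\lambda)=\exp[-N(\lambda^2/2+r\lambda^{2\nu}/(2\nu))]$, and let $x_{n,N,r}=b_n^2$ be the recurrence coefficients of the monic orthogonal polynomials: $\lambda\pi_n=\pi_{n+1}+b_n^2\pi_{n-1}$. Let $c_\nu=\binom{2\nu-1}{\nu-1}$. For $y\ge0$ let $Z_0(y)$ be the unique root in $(0,1]$ of $1=Z+c_\nu yZ^\nu$. For $g\ge1$ set $$Z_g(y)=\frac{Z_0(y)(Z_0(y)-1)P_{3g-2,\nu}(Z_0(y))}{(\nu-(\nu-1)Z_0(y))^{5g-1}},$$ where the $P_{3g-2,\nu}$ are fixed real polynomials of degree $3g-2$. For fixed $\gamma>0$, $Z_g(\gamma n^{\nu-1})$ has a convergent expansion for large $n$ of the form $$Z_g(\gamma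 n^{\nu-1})=\sum_{i\ge\nu-1}a_{i,g,\nu}(\gamma)\,n^{-i/\nu};$$ this defines the coefficients $a_{i,g,\nu}(\gamma)$. Hypothesis (H$_G$): there is a neighborhood $U$ of $1$ such that for each $\alpha\in U$ and each integer $m\ge0$ there exist $K_{1,m}(\alpha)$ and $n_0$ such that, for all $n\ge n_0$ and all $r>0$, $$\Big|x_{n,n/\alpha,r}-\alpha\sum_{g=0}^m\frac{Z_g(\alpha^{\nu-1}r)}{n^{2g}}\Big|<\frac{K_{1,m}(\alpha)}{n^{2m+2}}.$$ *)

From HB Require Import structures.
From mathcomp Require Import all_boot all_order all_algebra.
From mathcomp Require Import all_classical all_reals all_analysis.
Set Implicit Arguments. Unset Strict Implicit. Unset Printing Implicit Defensive.
Import Order.TTheory GRing.Theory Num.Theory.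
Local Open Scope ring_scope.
Local Open Scope classical_set_scope.

Section Defs.
Variable R : realType.

Definition wgt (nu : nat) (N r : R) (l : R) : R :=
  expR (- N * (l ^+ 2 / 2 + r * l ^+ (2 * nu) / (2 * nu)%:R)).

Definition ipf (nu : nat) (N r : R) (p q : {poly R}) : R -> R :=
  fun l => p.[l] * q.[l] * wgt nu N r l.

Definition ip (nu : nat) (N r : R) (p q : {poly R}) : R :=
  Rintegral lebesgue_measure setT (ipf nu N r p q).

Definition monic_OP (nu : nat) (N r : R) (pi : nat -> {poly R}) : Prop :=
  forall n, [/\ pi n \is monic, size (pi n) = n.+1 &
    forall m, (m < n)%N ->
      lebesgue_measure.-integrable setT (EFin \o ipf nu N r (pi m) (pi n)) /\
      ip nu N r (pi m) (pi n) = 0].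

Definition cnu (nu : nat) : R := ('C((2 * nu).-1, nu.-1))%:R.

Definition Z0 (nu : nat) (y : R) : R :=
  xget 0 [set z : R | 0 < z <= 1 /\ 1 = z + cnu nu * y * z ^+ nu].

(* Z_g(y), with P g playing the role of P_{3g-2,nu} *)
Definition Zg (nu : nat) (P : nat -> {poly R}) (g : nat) (y : R) : R :=
  if g == 0%N then Z0 nu y
  else Z0 nu y * (Z0 nu y - 1) * (P g).[Z0 nu y] /
       (nu%:R - (nu.-1)%:R * Z0 nu y) ^+ (5 * g).-1.

Definition Gd (nu : nat) (alpha : R) (a : nat -> nat -> R) (d n : nat) : R :=
  alpha * \sum_(0 <= j < ((d - nu.-1) %/ (2 * nu)).+1)
            \sum_(nu.-1 <= i < (d - 2 * j * nu).+1)
               a i j / (n%:R `^ ((2 * j)%:R + i%:R / nu%:R)).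

End Defs.

From HB Require Import structures.
From mathcomp Require Import all_boot all_order all_algebra.
From mathcomp Require Import all_classical all_reals all_analysis.
From mathcomp Require Import ring lra zify.
Import Order.TTheory GRing.Theory Num.Theory.
Import numFieldNormedType.Exports.
Set Implicit Arguments. Unset Strict Implicit. Unset Printing Implicit Defensive.
Local Open Scope ring_scope.
Local Open Scope classical_set_scope.

(* Write t_n := n^(-1/nu), so that n^-(2j + i/nu) = t_n^(2 j nu + i) and
   n^-m = t_n^(nu m); the whole statement becomes an estimate in powers of t_n.
   1. A power series sum_i c_i t^i that converges at some t0 > 0 has bounded
      terms there, so for 0 <= t <= t0/2 its remainder after k terms is at most
      C t^k (geometric tail).  Since t_n -> 0, the expansion of each
      Z_g(gamma n^(nu-1)) in powers of n^(-1/nu) therefore satisfies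
      |Z_g - sum_(i<k) a_(i,g) t_n^i| <= C_g t_n^k for n large.
   2. As a_(i,g) = 0 for i < nu-1, the partial sum G^(d) equals
      alpha sum_(g<=d) (sum_(i<=d-2g nu) a_(i,g) t_n^i) / n^(2g): the blocks with
      g beyond floor((d-nu+1)/(2nu)) vanish.
   3. Hypothesis (H_G) with m = d and r = n^(nu-1)/xi bounds
      x - alpha sum_(g<=d) Z_g / n^(2g) by K / n^(2d+2) <= K t_n^(d+1), and the
      block g of step 2 is within C_g t_n^(d-2g nu+1) / n^(2g) = C_g t_n^(d+1) of
      Z_g / n^(2g); the triangle inequality concludes. *)

Section PowerSeriesRemainder.
Variable R : realType.

Lemma geometric_block_le (q : R) (k p : nat) : 0 <= q -> q <= 1/2 ->
  \sum_(k <= i < k + p) q ^+ i <= 2 * q ^+ k - 2 * q ^+ (k + p).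
Proof.
move=> q_ge0 q_le; elim: p => [|p IH]; first by rewrite addn0 big_geq // subrr.
rewrite addnS big_nat_recr /= ?leq_addr // exprS.
have : 0 <= q ^+ (k + p) by rewrite exprn_ge0.
nra.
Qed.

Lemma power_series_remainder (c : nat -> R) (t0 M t l : R) (k : nat) :
  0 < t0 -> (forall i, `|c i * t0 ^+ i| <= M) -> 0 <= t -> t <= t0 / 2 ->
  series (fun i => c i * t ^+ i) @ \oo --> l ->
  `|l - \sum_(i < k) c i * t ^+ i| <= 2 * M / t0 ^+ k * t ^+ k.
Proof.
move=> t0_gt0 hM t_ge0 t_le hl.
have M_ge0 : 0 <= M by apply: le_trans (hM 0%N).
set q := t / t0.
have q_ge0 : 0 <= q by rewrite divr_ge0 // ltW.
have q_le : q <= 1/2 by rewrite ler_pdivrMr // mul1r mulrC.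
have term_q i : c i * t ^+ i = (c i * t0 ^+ i) * q ^+ i.
  rewrite /q exprMn exprVn -mulrA; congr (_ * _).
  by rewrite mulrA mulrC mulrA mulVf ?mul1r // expf_neq0 // gt_eqF.
have block_le p : `|\sum_(k <= i < k + p) c i * t ^+ i| <= 2 * M * q ^+ k.
  apply: le_trans (ler_norm_sum _ _ _) _.
  apply: (@le_trans _ _ (M * \sum_(k <= i < k + p) q ^+ i)).
    rewrite mulr_sumr; apply: ler_sum => i _.
    rewrite term_q normrM (ger0_norm (exprn_ge0 _ q_ge0)).
    by apply: ler_wpM2r; rewrite ?exprn_ge0.
  have := ler_wpM2l M_ge0 (geometric_block_le k p q_ge0 q_le).
  have : 0 <= M * q ^+ (k + p) by rewrite mulr_ge0 ?exprn_ge0.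
  lra.
have -> : 2 * M / t0 ^+ k * t ^+ k = 2 * M * q ^+ k.
  by rewrite /q exprMn exprVn mulrA -[_ / _ * _]mulrA [_^-1 * _]mulrC mulrA.
set S := \sum_(i < k) c i * t ^+ i.
have hS : (fun N => `|series (fun i => c i * t ^+ i) N - S|) @ \oo --> `|l - S|.
  by apply: cvg_norm; apply: cvgB => //; exact: cvg_cst.
apply: (ler_cvg_to hS (cvg_cst (2 * M * q ^+ k))).
exists k => // N /= kN.
rewrite /series /= (big_cat_nat (leq0n k) kN) /= big_mkord -/S addrC addrK.
by rewrite -(subnKC kN); exact: block_le.
Qed.

Lemma series_terms_bounded (u : nat -> R) (l : R) :
  series u @ \oo --> l -> exists M, forall i, `|u i| <= M.
Proof.
move=> hu; have [M [_ hM]] := cvg_seq_bounded (cvgP _ (cvg_series_cvg_0 (cvgP _ hu))).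
by exists (M + 1) => i; apply: (hM (M + 1)); rewrite ?ltrDl.
Qed.

End PowerSeriesRemainder.

Section InverseRoot.
Variable R : realType.
Variable nu : nat.
Hypothesis nu_gt0 : (0 < nu)%N.

(* t_y = y^(-1/nu), the variable in which the expansions are power series. *)
Definition invroot (y : R) : R := (y `^ nu%:R^-1)^-1.

Lemma invroot_gt0 (y : R) : 0 < y -> 0 < invroot y.
Proof. by move=> y_gt0; rewrite /invroot invr_gt0 powR_gt0. Qed.

Lemma invroot_expn (y : R) (i : nat) : 0 <= y ->
  y `^ (- (i%:R / nu%:R)) = invroot y ^+ i.
Proof.
move=> y_ge0; rewrite /invroot exprVn -powR_mulrn ?powR_ge0 // -powRrM powRN.
by rewrite mulrC.
Qed.

Lemma invroot_exp_nu (y : R) : 0 < y -> invroot y ^+ nu = y^-1.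
Proof.
move=> y_gt0; have y_ge0 := ltW y_gt0.
rewrite -invroot_expn // divff ?powRN ?powRr1 //.
by rewrite pnatr_eq0 -lt0n.
Qed.

Lemma invroot_natrX (n m : nat) : (0 < n)%N -> (n%:R ^+ m)^-1 = invroot n%:R ^+ (nu * m).
Proof. by move=> n_gt0; rewrite exprM invroot_exp_nu ?ltr0n // exprVn. Qed.

Lemma invroot_le1 (n : nat) : (0 < n)%N -> invroot n%:R <= 1.
Proof.
move=> n_gt0; have t_ge0 : 0 <= invroot n%:R by apply/ltW/invroot_gt0; rewrite ltr0n.
rewrite -(@ler_pXn2r _ nu) ?nnegrE ?ler01 //.
by rewrite invroot_exp_nu ?ltr0n // expr1n invf_le1 ?ltr0n // ler1n.
Qed.

Lemma invroot_eventually_le (e : R) : 0 < e ->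
  \forall n \near \oo, invroot n%:R <= e.
Proof.
move=> e_gt0; near=> n.
have n_gt0 : (0 < n)%N by near: n; exact: nbhs_infty_gt.
have en_le : (e ^+ nu)^-1 <= n%:R by near: n; exact: nbhs_infty_ger.
have t_ge0 : 0 <= invroot n%:R by apply/ltW/invroot_gt0; rewrite ltr0n.
rewrite -(@ler_pXn2r _ nu) ?nnegrE ?(ltW e_gt0) //.
rewrite invroot_exp_nu ?ltr0n // -[e ^+ nu]invrK lef_pV2 ?posrE ?ltr0n //.
by rewrite invr_gt0 exprn_gt0.
Unshelve. all: by end_near.
Qed.

Lemma expansion_truncation (c Z : nat -> R) (k : nat) :
  (\forall n \near \oo,
     ([series c i * (n%:R `^ (- (i%:R / nu%:R)))]_i : R^nat) @ \oo --> Z n) ->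
  exists C, \forall n \near \oo,
    `|Z n - \sum_(i < k) c i * invroot n%:R ^+ i| <= C * invroot n%:R ^+ k.
Proof.
move=> hZ.
have in_t (n : nat) : ([series c i * (n%:R `^ (- (i%:R / nu%:R)))]_i : R^nat)
    = series (fun i => c i * invroot n%:R ^+ i).
  by congr series; apply: funext => i /=; rewrite invroot_expn.
have [n1 [n1_gt0 hZ1]] : exists n1, (0 < n1)%N /\
    series (fun i => c i * invroot n1%:R ^+ i) @ \oo --> Z n1.
  have [N _ hN] := hZ; exists (maxn N 1).
  by rewrite -in_t leq_max orbT; split=> //; apply: hN; rewrite /= leq_maxl.
set t0 := invroot n1%:R.
have t0_gt0 : 0 < t0 by rewrite invroot_gt0 ?ltr0n.
have [M hM] : exists M, forall i, `|c i * t0 ^+ i| <= M.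
  exact: series_terms_bounded hZ1.
exists (2 * M / t0 ^+ k); near=> n.
have n_gt0 : (0 < n)%N by near: n; exact: nbhs_infty_gt.
apply: (power_series_remainder k t0_gt0 hM).
- by apply/ltW/invroot_gt0; rewrite ltr0n.
- by near: n; apply: invroot_eventually_le; rewrite divr_gt0.
- by rewrite -in_t; near: n.
Unshelve. all: by end_near.
Qed.

End InverseRoot.

Section PartialSum.
Variable R : realType.

Lemma sum_from_first_nonzero (m k : nat) (c f : nat -> R) :
  (forall i, (i < m)%N -> c i = 0) ->
  \sum_(m <= i < k) c i * f i = \sum_(i < k) c i * f i.
Proof.
move=> c0; rewrite -(big_mkord xpredT (fun i => c i * f i)).
have vanish l : (l <= m)%N -> \sum_(0 <= i < l) c i * f i = 0.
  move=> lm; rewrite big_nat_cond big1 // => i /andP[/andP[_ il] _].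
  by rewrite c0 ?mul0r // (leq_trans il lm).
case: (leqP m k) => mk; first by rewrite [RHS](big_cat_nat (leq0n m) mk) /= vanish ?add0r.
by rewrite vanish ?(ltnW mk) // big_geq // (ltnW mk).
Qed.

(* G^(d) as a sum over all g <= d of truncated expansions in t_n: the blocks
   with g > floor((d-nu+1)/(2nu)) only involve indices i < nu-1, hence vanish
   (nu >= 2 is needed: it makes the index i = 0 left by truncated subtraction
   one of the vanishing ones). *)
Lemma Gd_invroot (nu : nat) (alpha : R) (a : nat -> nat -> R) (d n : nat) :
  (2 <= nu)%N -> (forall i g, (i < nu.-1)%N -> a i g = 0) -> (0 < n)%N ->
  Gd nu alpha a d n = alpha * \sum_(0 <= g < d.+1)
     (\sum_(i < (d - 2 * g * nu).+1) a i g * invroot nu n%:R ^+ i) / n%:R ^+ (2 * g).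
Proof.
move=> nu_ge2 a0 n_gt0; rewrite /Gd; congr (alpha * _).
set J := ((d - nu.-1) %/ (2 * nu))%N.
have Jd : (J.+1 <= d.+1)%N by rewrite ltnS (leq_trans (leq_div _ _)) // leq_subr.
have high_blocks0 : \sum_(J.+1 <= g < d.+1)
    (\sum_(i < (d - 2 * g * nu).+1) a i g * invroot nu n%:R ^+ i) / n%:R ^+ (2 * g) = 0.
  rewrite big_nat_cond big1 // => g /andP[/andP[Jg _] _]; rewrite big1 ?mul0r // => i _.
  rewrite a0 ?mul0r //; apply: leq_trans (ltn_ord i) _.
  have d_lt : (d - nu.-1 < J.+1 * (2 * nu))%N by apply: ltn_ceil; lia.
  have Jg2 : (J.+1 * (2 * nu) <= 2 * g * nu)%N by nia.
  move: d_lt Jg2; generalize (J.+1 * (2 * nu))%N (2 * g * nu)%N => P1 P2.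
  lia.
rewrite [RHS](big_cat_nat (leq0n _) Jd) /= high_blocks0 addr0.
apply: eq_big_nat => g _; rewrite mulr_suml sum_from_first_nonzero //.
- apply: eq_bigr => i _.
  rewrite powRD ?pnatr_eq0 ?gtn_eqF ?implybT // powR_mulrn ?ler0n //.
  by rewrite -invroot_expn ?ler0n // powRN invfM mulrA mulrAC.
- by move=> i /a0.
Qed.

End PartialSum.

Lemma error_assembly (R : realType) (nu d n : nat) (alpha K X : R) (Z S C : nat -> R) :
  (0 < nu)%N -> (0 < n)%N ->
  `|X - alpha * \sum_(0 <= g < d.+1) Z g / n%:R ^+ (2 * g)| < K / n%:R ^+ (2 * d + 2) ->
  (forall g, (g < d.+1)%N ->
     `|Z g - S g| <= C g * invroot nu n%:R ^+ (d - 2 * g * nu).+1) ->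
  `|X - alpha * \sum_(0 <= g < d.+1) S g / n%:R ^+ (2 * g)|
    < (`|K| + `|alpha| * \sum_(0 <= g < d.+1) `|C g|) / n%:R `^ (d.+1%:R / nu%:R).
Proof.
move=> nu_gt0 n_gt0 hX hS.
set t := invroot nu (n%:R : R).
have t_gt0 : 0 < t by rewrite invroot_gt0 ?ltr0n.
have t_ge0 := ltW t_gt0.
have t_le1 : t <= 1 by exact: invroot_le1.
have exp_le a b : (b <= a)%N -> t ^+ a <= t ^+ b.
  by move=> ba; rewrite ler_wiXn2l.
have -> : (n%:R `^ (d.+1%:R / nu%:R))^-1 = t ^+ d.+1 by rewrite -powRN invroot_expn.
set ZZ := \sum_(0 <= g < d.+1) Z g / n%:R ^+ (2 * g) in hX *.
set SS := \sum_(0 <= g < d.+1) S g / n%:R ^+ (2 * g).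
have errZ : `|X - alpha * ZZ| < `|K| * t ^+ d.+1.
  apply: lt_le_trans hX _; rewrite (@invroot_natrX R nu nu_gt0) // -/t.
  apply: le_trans (ler_wpM2r (exprn_ge0 _ t_ge0) (ler_norm K)) _.
  by apply: ler_wpM2l => //; apply: exp_le; nia.
have errS : `|ZZ - SS| <= \sum_(0 <= g < d.+1) `|C g| * t ^+ d.+1.
  rewrite -sumrB; apply: le_trans (ler_norm_sum _ _ _) _.
  apply: ler_sum_nat => g /andP[_ gd].
  rewrite -mulrBl normrM (@invroot_natrX R nu nu_gt0) // -/t (ger0_norm (exprn_ge0 _ t_ge0)).
  apply: le_trans (ler_wpM2r (exprn_ge0 _ t_ge0) (hS g gd)) _.
  rewrite -mulrA -exprD.
  apply: le_trans (ler_wpM2r (exprn_ge0 _ t_ge0) (ler_norm (C g))) _.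
  by apply: ler_wpM2l => //; apply: exp_le; nia.
have -> : X - alpha * SS = (X - alpha * ZZ) + alpha * (ZZ - SS) by ring.
rewrite mulrDl -mulrA mulr_suml.
apply: le_lt_trans (ler_normD _ _) _; rewrite normrM.
have := ler_wpM2l (normr_ge0 alpha) errS.
lra.
Qed.

Theorem lemmaA4 (R : realType) (nu : nat) (hnu : (2 <= nu)%N)
  (P : nat -> {poly R})
  (hP : forall g : nat, (1 <= g)%N -> size (P g) = (3 * g - 2).+1)
  (pi : R -> R -> nat -> {poly R})
  (hpi : forall N r : R, 0 < N -> 0 < r -> monic_OP nu N r (pi N r))
  (x : nat -> R -> R -> R)
  (hx : forall N r : R, 0 < N -> 0 < r -> forall n : nat, (1 <= n)%N ->
          'X * pi N r n = pi N r n.+1 + x n N r *: pi N r n.-1)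
  (U : set R) (hU : nbhs (1 : R) U)
  (HG : forall alpha, U alpha -> forall m : nat,
     exists K : R, exists n0 : nat, forall n : nat, (n0 <= n)%N ->
       forall r : R, 0 < r ->
         `| x n (n%:R / alpha) r
            - alpha * \sum_(0 <= g < m.+1)
                 Zg nu P g (alpha ^+ nu.-1 * r) / n%:R ^+ (2 * g) |
         < K / n%:R ^+ (2 * m + 2))
  (alpha xi : R) (halpha : U alpha) (hxi : 0 < xi)
  (a : nat -> nat -> R)
  (ha0 : forall i g : nat, (i < nu.-1)%N -> a i g = 0)
  (ha : forall g : nat, \forall n \near \oo,
     ([series a i g * (n%:R `^ (- (i%:R / nu%:R)))]_i : R^nat) @ \oo -->
       Zg nu P g ((alpha ^+ nu.-1 / xi) * n%:R ^+ nu.-1))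
  (d : nat) (hd : (nu.-1 <= d)%N) :
  exists K : R, \forall n \near \oo,
    `| x n (n%:R / alpha) (n%:R ^+ nu.-1 / xi) - Gd nu alpha a d n |
      < K / (n%:R `^ (d.+1%:R / nu%:R)).
Proof.
have nu_gt0 : (0 < nu)%N by lia.
set gam := alpha ^+ nu.-1 / xi.
have /choice[C hC] : forall g, exists C : R, \forall n \near \oo,
    `|Zg nu P g (gam * n%:R ^+ nu.-1)
      - \sum_(i < (d - 2 * g * nu).+1) a i g * invroot nu n%:R ^+ i|
    <= C * invroot nu n%:R ^+ (d - 2 * g * nu).+1.
  by move=> g; exact: (expansion_truncation nu_gt0 _ (ha g)).
have [K [n0 hK]] := HG alpha halpha d.
exists (`|K| + `|alpha| * \sum_(0 <= g < d.+1) `|C g|); near=> n.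
have hblocks (g : 'I_d.+1) :
    `|Zg nu P g (gam * n%:R ^+ nu.-1)
      - \sum_(i < (d - 2 * g * nu).+1) a i g * invroot nu n%:R ^+ i|
    <= C g * invroot nu n%:R ^+ (d - 2 * g * nu).+1.
  by move: g; near: n; apply: filter_forall => g; exact: hC.
have n_gt0 : (0 < n)%N by near: n; exact: nbhs_infty_gt.
have hZ : `|x n (n%:R / alpha) (n%:R ^+ nu.-1 / xi)
    - alpha * \sum_(0 <= g < d.+1) Zg nu P g (gam * n%:R ^+ nu.-1) / n%:R ^+ (2 * g)|
    < K / n%:R ^+ (2 * d + 2).
  have r_gt0 : 0 < n%:R ^+ nu.-1 / xi by rewrite divr_gt0 ?exprn_gt0 ?ltr0n.
  have <- : alpha ^+ nu.-1 * (n%:R ^+ nu.-1 / xi) = gam * n%:R ^+ nu.-1.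
    by rewrite /gam mulrAC -mulrA.
  by apply: hK r_gt0; near: n; exact: nbhs_infty_ge.
rewrite Gd_invroot //.
apply: (error_assembly nu_gt0 n_gt0 hZ) => g gd.
exact: (hblocks (Ordinal gd)).
Unshelve. all: by end_near.
Qed.
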